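(* There is a constant $C_0$ such that the following holds. Let $n\ge1$, let $b_1,\dots,b_n\ge2$ be integers and $\varepsilon_1,\dots,\varepsilon_n\in\{+1,-1\}$ with $b_{j+1}\ge b_j^2$ for $1\le j\le n-1$, and let $x=[\langle b_j:\varepsilon_j\rangle_{j=1}^n]$. Define $x_0=1$ and $x_i=G^{\circ(i-1)}(x)$ for $1\le i\le n$. Then \[\frac{|x_n|}{|x_1|}\le C_0\prod_{i=0}^{n-1}|x_i|.\]
   Context: For $x\in\mathbb{R}$, $[x]$ denotes the closest integer to $x$ with the convention $x\in([x]-1/2,[x]+1/2]$ for $x>0$, $x\in[[x]-1/2,[x]+1/2)$ for $x<0$, and $[0]=0$. $G(z)=-1/z-[\operatorname{Re}(-1/z)]$ for $z\ne0$. For integers $b_j\ge2$ and $\varepsilon_j\in\{\pm1\}$, $[\langle b_j:\varepsilon_j\rangle_{j=1}^n]=\cfrac{\varepsilon_1}{b_1+\cfrac{\varepsilon_2}{\ddots+\cfrac{\varepsilon_n}{b_n}}}$. *)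

From HB Require Import structures.
From mathcomp Require Import all_boot all_order all_algebra.
From mathcomp Require Import reals.
Set Implicit Arguments. Unset Strict Implicit. Unset Printing Implicit Defensive.
Import Order.TTheory GRing.Theory Num.Theory.
Local Open Scope ring_scope.

(* Closest integer [x], ties rounded towards zero:
   x in ([x]-1/2, [x]+1/2] for x>0, x in [[x]-1/2, [x]+1/2) for x<0, [0]=0. *)
Definition nearest_int {R : realType} (x : R) : int :=
  if 0 < x then Num.ceil (x - 2^-1)
  else if x < 0 then Num.floor (x + 2^-1)
  else 0.

(* G(z) = -1/z - [Re(-1/z)], restricted to real arguments (Re is the identity). *)
Definition Gmap {R : realType} (z : R) : R :=
  - z^-1 - (nearest_int (- z^-1))%:~R.

(* cfrac b e i m = [< b_j : e_j >_{j=i}^{i+m-1}]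
   = e_i / (b_i + e_{i+1} / (b_{i+1} + ... + e_{i+m-1}/b_{i+m-1})) ; empty = 0 *)
Fixpoint cfrac {R : realType} (b e : nat -> int) (i m : nat) : R :=
  match m with
  | 0%N => 0
  | m'.+1 => (e i)%:~R / ((b i)%:~R + cfrac b e i.+1 m')
  end.

Definition xseq {R : realType} (x : R) (i : nat) : R :=
  match i with
  | 0%N => 1
  | i'.+1 => iter i' Gmap x
  end.

(** Every iterate is, up to sign, a tail [t_i = [<b_j : e_j>_{j=i}^n]]: since the
    tails are small, [-1/(e/(b + t))] is an integer plus a term of modulus below
    [1/2], so [G] just strips off the leading partial quotient. The bounds
    [1/(b_i + 1) <= |t_i| <= 1/(b_i - 1)] give [|x_n|/|x_1| <= (b_1 + 1)/(b_n - 1)],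
    while [b_{i+1} - 1 >= (b_i - 1)(b_i + 1)] and [(b_i + 1)|t_i| >= 1] telescope
    to [b_1 + 1 <= 3 (b_n - 1) |t_1 ... t_{n-1}|]; so [C_0 = 3] works. *)
From HB Require Import structures.
From mathcomp Require Import all_boot all_order all_algebra.
From mathcomp Require Import reals.
From mathcomp Require Import lra zify ring.
Import Order.TTheory GRing.Theory Num.Theory.
Local Open Scope ring_scope.

Definition unit_sign (s : int) : Prop := s = 1 \/ s = -1.

Lemma norm_unit_sign (R : numDomainType) (s : int) :
  unit_sign s -> `|s%:~R : R| = 1.
Proof. by case=> ->; rewrite ?rmorphN ?rmorph1 ?normrN normr1. Qed.

Lemma unit_signN (s : int) : unit_sign s -> unit_sign (- s).
Proof. by case=> ->; [right | left]. Qed.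

Lemma unit_signM (s t : int) :
  unit_sign s -> unit_sign t -> unit_sign (s * t).
Proof. by case=> ->; case=> ->; [left | right | right | left]. Qed.

Lemma nearest_intzD_small (R : realType) (k : int) (t : R) :
  `|t| < 2^-1 -> nearest_int (k%:~R + t) = k.
Proof.
rewrite ltr_norml -div1r => /andP[t_gt t_lt]; rewrite /nearest_int.
have : (k <= -1) || (k == 0) || (1 <= k) by lia.
case/orP=> [/orP[k_le|/eqP->]|k_ge].
- have {}k_le : k%:~R <= -1 :> R by rewrite -(ler_int R) in k_le.
  rewrite ifF; last by apply/negbTE; rewrite -leNgt; lra.
  rewrite ifT; last by lra.
  by apply: floor_def; rewrite rmorphD /= -div1r; apply/andP; split; lra.
- rewrite add0r; case: ltgtP => // t_sgn.
  + by apply: ceil_def; rewrite -div1r; apply/andP; split; lra.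
  + by apply: floor_def; rewrite -div1r; apply/andP; split; lra.
- have {}k_ge : 1 <= k%:~R :> R by rewrite -(ler_int R) in k_ge.
  rewrite ifT; last by lra.
  by apply: ceil_def; rewrite rmorphB /= -div1r; apply/andP; split; lra.
Qed.

Lemma Gmap_sign_frac (R : realType) (u b : int) (y : R) :
  unit_sign u -> `|y| < 2^-1 -> b%:~R + y != 0 ->
  Gmap (u%:~R / (b%:~R + y)) = (- u)%:~R * y.
Proof.
move=> u_sign y_small den_neq0.
have inv_frac : - (u%:~R / (b%:~R + y))^-1 = (- u * b)%:~R + (- u)%:~R * y :> R.
  by case: u_sign => ->; rewrite /= ?rmorphM ?rmorphN ?rmorph1 /=; field.
have uy_small : `|(- u)%:~R * y| < 2^-1.
  by rewrite normrM rmorphN normrN norm_unit_sign ?mul1r.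
by rewrite /Gmap inv_frac nearest_intzD_small // addrC addKr.
Qed.

(* The induction carries the crude bound [|tail| <= 1], which keeps the
   denominator [b_i + tail] positive. *)
Lemma cfrac_norm_bounds (R : realType) (b e : nat -> int) (i m : nat) :
  (0 < m)%N ->
  (forall j, (i <= j < i + m)%N -> 2 <= b j) ->
  (forall j, (i <= j < i + m)%N -> unit_sign (e j)) ->
  ((b i)%:~R - 1) * `|cfrac b e i m : R| <= 1 /\
  1 <= ((b i)%:~R + 1) * `|cfrac b e i m : R|.
Proof.
elim: m i => [//|m IH] i _ b_ge2 e_sign /=.
set y : R := cfrac b e i.+1 m.
have i_in : (i <= i < i + m.+1)%N by lia.
have bi_ge2 : 2 <= (b i)%:~R :> R by have := b_ge2 i i_in; rewrite -(ler_int R).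
have y_le1 : `|y| <= 1.
  case: m IH b_ge2 e_sign i_in @y => [|m] IH b_ge2 e_sign _; first by rewrite /= normr0.
  have [up _] : ((b i.+1)%:~R - 1) * `|cfrac b e i.+1 m.+1 : R| <= 1 /\
      1 <= ((b i.+1)%:~R + 1) * `|cfrac b e i.+1 m.+1 : R|.
    by apply: IH => // j j_in; [apply: b_ge2 | apply: e_sign]; lia.
  have bi1_ge2 : 2 <= (b i.+1)%:~R :> R.
    by have := b_ge2 i.+1 ltac:(lia); rewrite -(ler_int R).
  by have := normr_ge0 (cfrac b e i.+1 m.+1 : R) => y_ge0 /=; nra.
move: y_le1; rewrite ler_norml => /andP[y_ge y_le].
have den_gt0 : 0 < (b i)%:~R + y by lra.
rewrite normrM norm_unit_sign ?mul1r; last exact: e_sign.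
rewrite normfV gtr0_norm // ler_pdivrMr // ler_pdivlMr //.
by split; lra.
Qed.

Section ContinuedFractionIterates.
Variables (R : realType) (n : nat) (b e : nat -> int).
Hypothesis n_gt0 : (0 < n)%N.
Hypothesis b_ge2 : forall j, (1 <= j <= n)%N -> 2 <= b j.
Hypothesis e_sign : forall j, (1 <= j <= n)%N -> unit_sign (e j).
Hypothesis b_sqr_le : forall j, (1 <= j <= n.-1)%N -> b j ^+ 2 <= b j.+1.

Local Notation B j := ((b j)%:~R : R).
Local Notation tail i := (cfrac b e i (n - i).+1 : R).
Local Notation x := (cfrac b e 1 n : R).

Lemma B_ge2 j : (1 <= j <= n)%N -> 2 <= B j.
Proof. by move=> j_in; have := b_ge2 j j_in; rewrite -(ler_int R). Qed.

Lemma B_sqr_le j : (1 <= j < n)%N -> B j ^+ 2 <= B j.+1.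
Proof. by move=> j_in; rewrite -rmorphXn ler_int; apply: b_sqr_le; lia. Qed.

Lemma tail1E : tail 1 = x.
Proof. by rewrite subn1 prednK. Qed.

Lemma tailE i : (i < n)%N -> tail i = (e i)%:~R / (B i + tail i.+1).
Proof. by move=> lt_in; rewrite -(subnSK lt_in). Qed.

Lemma tail_bounds i : (1 <= i <= n)%N ->
  (B i - 1) * `|tail i| <= 1 /\ 1 <= (B i + 1) * `|tail i|.
Proof.
by move=> i_in; apply: cfrac_norm_bounds => // j j_in;
  [apply: b_ge2 | apply: e_sign]; lia.
Qed.

Lemma tail_small i : (1 <= i < n)%N -> `|tail i.+1| <= 3^-1.
Proof.
move=> i_in; have [up _] := tail_bounds i.+1 ltac:(lia).
have Bi1_ge4 : 4 <= B i.+1.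
  by have := B_ge2 i ltac:(lia); have := B_sqr_le i i_in; nra.
rewrite -[3^-1]div1r ler_pdivlMr //; have := normr_ge0 (tail i.+1); nra.
Qed.

Lemma iter_Gmap_tail i : (i < n)%N ->
  exists2 s : int, unit_sign s & iter i Gmap x = s%:~R * tail i.+1.
Proof.
elim: i => [_|i IH i_lt]; first by exists 1; [left | rewrite mul1r tail1E].
have [s s_sign iter_i] := IH (ltnW i_lt).
have y_small := tail_small i.+1 ltac:(lia).
have Bi1_ge2 := B_ge2 i.+1 ltac:(lia).
have se_sign : unit_sign (s * e i.+1) by apply: unit_signM => //; apply: e_sign; lia.
exists (- (s * e i.+1)); first exact: unit_signN.
rewrite iterS iter_i tailE // mulrA -intrM Gmap_sign_frac //.
- by apply: (le_lt_trans y_small); rewrite ltf_pV2 ?posrE //; lra.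
- move: y_small; rewrite ler_norml => /andP[y_ge y_le].
  by rewrite gt_eqF //; lra.
Qed.

Lemma norm_xseq i : (1 <= i <= n)%N -> `|xseq x i| = `|tail i|.
Proof.
case: i => [//|i] i_in /=; have [s s_sign ->] := iter_Gmap_tail i ltac:(lia).
by rewrite normrM norm_unit_sign ?mul1r.
Qed.

Lemma prod_tail_lower k : (1 <= k <= n)%N ->
  B 1 + 1 <= 3 * (B k - 1) * \prod_(1 <= i < k) `|tail i|.
Proof.
elim: k => [//|k IH] k_in; have B1_ge2 := B_ge2 1 ltac:(lia).
case: k IH k_in => [_ _|k IH k_in]; first by rewrite big_geq //; lra.
rewrite big_nat_recr //=.
set P := \prod_(1 <= i < k.+1) _ in IH *; set t := `|tail k.+1|.
have P_ge0 : 0 <= P by apply: prodr_ge0 => i _.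
have [_ t_ge] := tail_bounds k.+1 ltac:(lia).
have Bk_ge2 := B_ge2 k.+1 ltac:(lia); have Bk_sqr := B_sqr_le k.+1 ltac:(lia).
apply: (le_trans (IH ltac:(lia))).
apply: (le_trans (y := 3 * (B k.+1 - 1) * P * ((B k.+1 + 1) * t))).
  by rewrite ler_peMr //; apply: mulr_ge0 => //; lra.
rewrite (_ : _ * _ = 3 * (B k.+1 ^+ 2 - 1) * (P * t)); last by ring.
apply: ler_wpM2r; first exact: mulr_ge0 P_ge0 (normr_ge0 _).
by rewrite ler_pM2l //; lra.
Qed.

Lemma tail_ratio_le : `|tail n| / `|x| <= 3 * \prod_(1 <= i < n) `|tail i|.
Proof.
rewrite -tail1E.
have [up_n _] := tail_bounds n ltac:(lia).
have [_ low_1] := tail_bounds 1 ltac:(lia).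
have B1_ge2 := B_ge2 1 ltac:(lia); have Bn_ge2 := B_ge2 n ltac:(lia).
have P_low := prod_tail_lower n ltac:(lia).
set P := \prod_(1 <= i < n) _ in P_low *.
have t1_gt0 : 0 < `|tail 1| by have := normr_ge0 (tail 1); nra.
rewrite ler_pdivrMr // -(ler_pM2l (_ : 0 < B n - 1)); last by lra.
apply: (le_trans up_n); apply: (le_trans low_1).
rewrite (_ : _ * (_ * _) = 3 * (B n - 1) * P * `|tail 1|); last by ring.
by rewrite ler_pM2r.
Qed.

End ContinuedFractionIterates.

Theorem lemma6p5 (R : realType) :
  exists C0 : R,
  forall (n : nat) (b eps : nat -> int),
    (1 <= n)%N ->
    (forall j, (1 <= j <= n)%N -> 2 <= b j) ->
    (forall j, (1 <= j <= n)%N -> eps j = 1 \/ eps j = -1) ->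
    (forall j, (1 <= j <= n.-1)%N -> b j ^+ 2 <= b j.+1) ->
    let x : R := cfrac b eps 1 n in
    `|xseq x n| / `|xseq x 1| <= C0 * \prod_(0 <= i < n) `|xseq x i|.
Proof.
exists 3 => n b eps n_gt0 b_ge2 eps_sign b_sqr_le /=.
have n_in : (1 <= n <= n)%N by rewrite n_gt0 leqnn.
rewrite big_ltn // normr1 mul1r !norm_xseq //.
rewrite (eq_big_nat _ _ (F2 := fun i => `|cfrac b eps i (n - i).+1 : R|)).
  exact: tail_ratio_le.
by move=> i i_in; rewrite norm_xseq //; lia.
Qed.
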